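(* Let $d>1$ be an integer. There is a constant $K>0$ such that for all $\epsilon\in(0,1)$ and $r>1$: if $p$ is a monic polynomial of degree $d$ and $\alpha\in\mathbb{C}$ is such that all roots $z_1,\dots,z_d$ of $p(z)=\alpha$ lie in $\mathbb{D}_r(0)$ and $\operatorname{dist}(\{z_1,\dots,z_d\},\operatorname{Crit}(p))>\epsilon$, then $|z_i-z_j|>K(\epsilon/r)^{d^2}$ for all $1\le i<j\le d$.
   Context: $\operatorname{Crit}(p)$ is the set of critical points of $p$; $\operatorname{dist}$ is the Euclidean distance between sets. *)

From HB Require Import structures.
From mathcomp Require Export all_boot all_order all_algebra.
From mathcomp Require Export complex.
From mathcomp Require Export reals.
Set Implicit Arguments.
Unset Strict Implicit.
Unset Printing Implicit Defensive.
Export Order.TTheory GRing.Theory Num.Theory.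


(* Write q = p - alpha = prod_k (X - z_k); then p' = q'.
   - Upper bound: by the product rule q'(z_i) = prod_(k != i) (z_i - z_k); keeping
     the factor k = j and bounding the d - 2 others by |z_i - z_k| <= 2r gives
     |p'(z_i)| <= |z_i - z_j| (2r)^(d-2).
   - Lower bound: p' = d * prod_c (X - c) over its d - 1 roots c (algebraic
     closedness), and every root c is at distance > eps from z_i, so
     |p'(z_i)| >= d eps^(d-1).
   - Combining both, an elementary estimate valid for eps < 1 < r turns
     d eps^(d-1) <= |z_i - z_j| (2r)^(d-2) into |z_i - z_j| > 2^-d (eps/r)^(d^2),
     i.e. the theorem holds with K = 2^-d. *)

Set Implicit Arguments.
Unset Strict Implicit.
Local Open Scope ring_scope.

Lemma deriv_prod_XsubC_root (R : comNzRingType) (z : seq R) (i : nat) :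
  (i < size z)%N ->
  (\prod_(w <- z) ('X - w%:P))^`().[z`_i] =
  \prod_(k < size z | k != i :> nat) (z`_i - z`_k).
Proof.
move=> hi; rewrite (big_nth 0) big_mkord (bigD1 (Ordinal hi)) //=.
rewrite derivM derivXsubC mul1r hornerD hornerM hornerXsubC subrr mul0r addr0.
by rewrite horner_prod; apply: eq_bigr => k _; rewrite hornerXsubC.
Qed.

Lemma card_ord_neq2 (n : nat) (i j : 'I_n) : i != j ->
  #|[pred k : 'I_n | (k != i) && (k != j)]| = (n - 2)%N.
Proof.
move=> hij.
rewrite -[n in RHS]card_ord [in RHS](cardD1 i) [in RHS](cardD1 j) !inE eq_sym hij /=.
rewrite add1n add1n subn2 /=.
by apply: eq_card => k; rewrite !inE andbT andbC.
Qed.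

Lemma norm_prod_diff_le (R : numDomainType) (z : seq R) (r : R) (i j : nat) :
  (i < size z)%N -> (j < size z)%N -> i != j ->
  (forall k, (k < size z)%N -> `|z`_k| < r) ->
  `|\prod_(k < size z | k != i :> nat) (z`_i - z`_k)|
    <= `|z`_i - z`_j| * (2 * r) ^+ (size z - 2).
Proof.
move=> hi hj hij hzr.
rewrite (bigD1 (Ordinal hj)) /=; last by rewrite eq_sym.
rewrite normrM ler_wpM2l // normr_prod.
have -> : (size z - 2)%N =
    #|[pred k : 'I_(size z) | (k != Ordinal hi) && (k != Ordinal hj)]|.
  by rewrite card_ord_neq2 // -val_eqE.
rewrite -prodr_const; apply: ler_prod => k /andP[hki hkj]; rewrite normr_ge0 /=.
rewrite (le_trans (ler_normB _ _)) // mulr2n mulrDl mul1r.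
by rewrite lerD // ltW // hzr.
Qed.

Lemma norm_horner_prod_ge (R : numDomainType) (a x eps : R) (cs : seq R) :
  0 <= eps -> (forall c, c \in cs -> eps < `|x - c|) ->
  `|a| * eps ^+ size cs <= `|(a *: \prod_(c <- cs) ('X - c%:P)).[x]|.
Proof.
move=> he hfar; rewrite hornerZ horner_prod normrM normr_prod ler_wpM2l //.
have -> : eps ^+ size cs = \prod_(c <- cs) eps.
  by rewrite (big_nth 0) prodr_const_nat subn0.
rewrite !big_seq; apply: ler_prod => c hc.
by rewrite he hornerXsubC ltW ?hfar.
Qed.

Lemma deriv_monic_factor (C : numClosedFieldType) (p : {poly C}) (n : nat) :
  (0 < n)%N -> p \is monic -> size p = n.+1 ->
  exists2 cs : seq C, size cs = n.-1 &
    p^`() = n%:R *: \prod_(c <- cs) ('X - c%:P).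
Proof.
move=> hn hm hs.
have hcoef : p^`()`_n.-1 = n%:R.
  rewrite coef_deriv prednK //.
  by move/monicP: hm; rewrite lead_coefE hs /= => ->.
have hn0 : n%:R != 0 :> C by rewrite pnatr_eq0 -lt0n.
have hp0 : p != 0 by rewrite -size_poly_gt0 hs.
have hsize : size p^`() = n.
  apply/eqP; rewrite eqn_leq -ltnS -hs lt_size_deriv //=.
  rewrite -(prednK hn) ltnNge; apply/negP => /leq_sizeP/(_ _ (leqnn _)).
  by rewrite hcoef; apply/eqP.
have [cs hcs] := closed_field_poly_normal p^`().
rewrite lead_coefE hsize hcoef in hcs; exists cs => //.
have := size_scale (\prod_(c <- cs) ('X - c%:P)) hn0.
by rewrite -hcs hsize size_prod_XsubC => ->.
Qed.

Lemma size_level_roots (R : idomainType) (p : {poly R}) (alpha : R) (z : seq R) (d : nat) :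
  (0 < d)%N -> size p = d.+1 -> p - alpha%:P = \prod_(w <- z) ('X - w%:P) ->
  size z = d.
Proof.
move=> hd hs hq.
have : size (p - alpha%:P) = (size z).+1 by rewrite hq size_prod_XsubC.
rewrite size_polyDl ?hs => [[]//|].
by rewrite size_polyN (leq_ltn_trans (size_polyC_leq1 alpha)) // ltnS.
Qed.

Lemma separation_bound (R : realFieldType) (d : nat) (eps r delta : R) :
  (1 < d)%N -> 0 < eps -> eps < 1 -> 1 < r ->
  d%:R * eps ^+ d.-1 <= delta * (2 * r) ^+ (d - 2) ->
  (2 ^+ d)^-1 * (eps / r) ^+ (d ^ 2) < delta.
Proof.
move=> hd he0 he1 hr hdelta.
have hr0 : 0 < r by apply: lt_trans hr.
have hdd : (d < d ^ 2)%N by rewrite expnS expn1 -{1}[d]muln1 ltn_mul2l ltnW.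
have hM0 : 0 < (2 * r) ^+ (d - 2) by rewrite exprn_gt0 ?mulr_gt0.
have heps : eps ^+ (d ^ 2) < eps ^+ d.-1.
  by rewrite ltr_iXn2l // (leq_ltn_trans (leq_pred d)).
have hM : (2 * r) ^+ (d - 2) <= 2 ^+ d * r ^+ (d ^ 2).
  have hd2 : (d - 2 <= d ^ 2)%N by rewrite (leq_trans (leq_subr 2 d)) // ltnW.
  rewrite exprMn ler_pM ?exprn_ge0 ?ler_eXn2l ?ltr1n ?leq_subr //; exact: ltW.
have hdelta0 : 0 <= delta.
  have hpos : 0 <= d%:R * eps ^+ d.-1 by rewrite mulr_ge0 ?ler0n ?exprn_ge0 ?ltW.
  by rewrite -(pmulr_lge0 _ hM0) (le_trans hpos).
rewrite expr_div_n mulrA ltr_pdivrMr ?exprn_gt0 // ltr_pdivrMl ?exprn_gt0 //.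
rewrite mulrCA (lt_le_trans heps) // (le_trans _ (ler_wpM2l hdelta0 hM)) //.
by rewrite (le_trans _ hdelta) // ler_peMl ?exprn_ge0 ?ltW ?ltr1n.
Qed.

Local Open Scope complex_scope.

Theorem lemmaA3 (R : realType) (d : nat) (hd : (1 < d)%N) :
  exists K : R, 0 < K /\
  forall (eps r : R), 0 < eps -> eps < 1 -> 1 < r ->
  forall (p : {poly R[i]}) (alpha : R[i]) (z : seq R[i]),
    p \is monic -> size p = d.+1 ->
    p - alpha%:P = \prod_(w <- z) ('X - w%:P) ->
    (forall i, (i < d)%N -> `|z`_i| < r%:C) ->
    (forall i, (i < d)%N -> forall c, root p^`() c -> eps%:C < `|z`_i - c|) ->
    forall i j, (i < j)%N -> (j < d)%N ->
      (K * (eps / r) ^+ (d ^ 2))%:C < `|z`_i - z`_j|.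
Proof.
exists (2 ^+ d)^-1; split; first by rewrite invr_gt0 exprn_gt0.
move=> eps r he0 he1 hr p alpha z hm hs hq hzr hfar i j hij hj.
have hi : (i < d)%N := ltn_trans hij hj.
have hd0 : (0 < d)%N := ltnW hd.
have hsz : size z = d := size_level_roots hd0 hs hq.
have [cs hcs hp'] := deriv_monic_factor hd0 hm hs.
have hlow : (d%:R * eps ^+ d.-1)%:C <= `|p^`().[z`_i]|.
  rewrite rmorphM rmorph_nat rmorphXn -(normr_nat _ d) -hcs hp'.
  apply: norm_horner_prod_ge; first by rewrite lecR ltW.
  move=> c hc; apply: hfar => //.
  by rewrite hp' rootZ ?pnatr_eq0 -?lt0n // root_prod_XsubC.
have hup : `|p^`().[z`_i]| <= `|z`_i - z`_j| * ((2 * r) ^+ (d - 2))%:C.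
  have -> : p^`() = (p - alpha%:P)^`() by rewrite derivB derivC subr0.
  rewrite rmorphXn rmorphM rmorph_nat hq deriv_prod_XsubC_root ?hsz // -hsz.
  by apply: norm_prod_diff_le; rewrite ?hsz // ltn_eqF.
have hsep := le_trans hlow hup.
rewrite normc_def -rmorphM lecR in hsep.
by rewrite normc_def ltcR; apply: separation_bound hsep.
Qed.
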